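(* With notation as in the context, define for $X,Y\in\zeta_s^+(V_0)$ the product $X\circ Y:=(Y+s)(X+Y)^{-1}(X+s)-s$. Then for all $x,y\in\mathrm{H}(V_0^s)$ one has $xy\in\mathrm{H}(V_0^s)$ and $a_{xy}=a_x\circ a_y$.
   Context: $V_0=V_0^+\oplus V_0^-$ is an orthogonal decomposition of a finite-dimensional complex Hermitian space, $s=\mathrm{Id}_{V_0^+}\oplus(-\mathrm{Id}_{V_0^-})$, $\mathrm{H}(V_0^s)=\{g\in\mathrm{GL}(V_0):g^\dagger sg<s\}$, $\zeta_s^+(V_0)=\{X\in\mathrm{End}(V_0):\tfrac12(X+X^\dagger)>0,\ \mathrm{Det}(X+s)\ne0\}$, and $a_h=s(1+h)(1-h)^{-1}$ for $h\in\mathrm{H}(V_0^s)$ (with $1=\mathrm{Id}_{V_0}$); $1-h$ is invertible and $a_h\in\zeta_s^+(V_0)$. Note $X+Y$ is invertible for $X,Y\in\zeta_s^+(V_0)$ since $\mathfrak{Re}(X+Y)>0$. *)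

From HB Require Import structures.
From mathcomp Require Import all_boot all_order all_algebra.
Set Implicit Arguments. Unset Strict Implicit. Unset Printing Implicit Defensive.
Import Order.TTheory GRing.Theory Num.Theory.
Local Open Scope ring_scope.

(* V_0 = C^n with the standard Hermitian inner product, C any numeric
   algebraically closed field (e.g. algC, or complex R for R : rcfType). *)

Definition adj (C : numClosedFieldType) (n : nat) (X : 'M[C]_n) : 'M[C]_n :=
  map_mx Num.conj (X^T).

Definition posdef (C : numClosedFieldType) (n : nat) (H : 'M[C]_n) : Prop :=
  adj H = H /\
  forall v : 'cV[C]_n, v != 0 -> 0 < ((map_mx Num.conj v^T) *m H *m v) 0 0.

(* s = Id on V0^+ (+) -Id on V0^- for an orthogonal decomposition:
   exactly a self-adjoint involution *)
Definition is_sym_involution (C : numClosedFieldType) (n : nat) (s : 'M[C]_n) : Prop :=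
  adj s = s /\ s *m s = 1%:M.

Definition Hs (C : numClosedFieldType) (n : nat) (s g : 'M[C]_n) : Prop :=
  g \in unitmx /\ posdef (s - adj g *m s *m g).

Definition zeta_plus (C : numClosedFieldType) (n : nat) (s X : 'M[C]_n) : Prop :=
  posdef (2^-1 *: (X + adj X)) /\ \det (X + s) != 0.

Definition a_of (C : numClosedFieldType) (n : nat) (s h : 'M[C]_n) : 'M[C]_n :=
  s *m (1%:M + h) *m invmx (1%:M - h).

Definition circ (C : numClosedFieldType) (n : nat) (s X Y : 'M[C]_n) : 'M[C]_n :=
  (Y + s) *m invmx (X + Y) *m (X + s) - s.

From HB Require Import structures.
From mathcomp Require Import all_boot all_order all_algebra.
Set Implicit Arguments. Unset Strict Implicit. Unset Printing Implicit Defensive.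
Import Order.TTheory GRing.Theory Num.Theory.
Local Open Scope ring_scope.

(* Closure: s - (xy)^dagger s (xy) = (s - y^dagger s y) + y^dagger (s - x^dagger s x) y
   is a sum of two positive definite matrices.  Composition law: with
   U := (1 - x)^-1 and W := (1 - y)^-1 one has a_x + s = 2 s U, and the identity
   U (1 - xy) W = U + W - 1 gives a_x + a_y = (a_x + s) (1 - xy) W; inverting this
   product collapses (a_y + s) (a_x + a_y)^-1 (a_x + s) to 2 s (1 - xy)^-1, which
   is a_(xy) + s. *)

Section Adjoint.
Variables (C : numClosedFieldType) (n : nat).
Implicit Types A B : 'M[C]_n.

Lemma adjD A B : adj (A + B) = adj A + adj B.
Proof. by rewrite /adj linearD /= map_mxD. Qed.

Lemma adjM A B : adj (A *m B) = adj B *m adj A.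
Proof. by rewrite /adj trmx_mul map_mxM. Qed.

Lemma adjK A : adj (adj A) = A.
Proof. by apply/matrixP=> i j; rewrite /adj !mxE conjCK. Qed.

Lemma conjT_mulmx A (v : 'cV[C]_n) :
  map_mx Num.conj (A *m v)^T = map_mx Num.conj v^T *m adj A.
Proof. by rewrite /adj trmx_mul map_mxM. Qed.

End Adjoint.

Section PositiveDefinite.
Variables (C : numClosedFieldType) (n : nat).
Implicit Types A B y : 'M[C]_n.

Lemma posdefD A B : posdef A -> posdef B -> posdef (A + B).
Proof.
move=> [hA pA] [hB pB]; split; first by rewrite adjD hA hB.
by move=> v v0; rewrite mulmxDr mulmxDl mxE addr_gt0 ?pA ?pB.
Qed.

Lemma posdef_congruence y A :
  y \in unitmx -> posdef A -> posdef (adj y *m A *m y).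
Proof.
move=> yu [hA pA]; split; first by rewrite !adjM adjK hA mulmxA.
move=> v v0; have yv0 : y *m v != 0.
  by apply: contraNneq v0 => yv; rewrite -(mulKmx yu v) yv mulmx0.
by have := pA _ yv0; rewrite conjT_mulmx !mulmxA.
Qed.

End PositiveDefinite.

Section Contractions.
Variables (C : numClosedFieldType) (n : nat) (s : 'M[C]_n).
Implicit Types x y h : 'M[C]_n.

Lemma Hs_defect_mul x y :
  s - adj (x *m y) *m s *m (x *m y)
  = (s - adj y *m s *m y) + adj y *m (s - adj x *m s *m x) *m y.
Proof. by rewrite adjM mulmxBr mulmxBl !mulmxA addrA subrK. Qed.

Lemma Hs_mul x y : Hs s x -> Hs s y -> Hs s (x *m y).
Proof.
move=> [xu px] [yu py]; split; first by rewrite unitmx_mul xu yu.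
by rewrite Hs_defect_mul; apply: posdefD => //; apply: posdef_congruence.
Qed.

(* A fixed vector v of h would give v^dagger (s - h^dagger s h) v = 0. *)
Lemma Hs_unit1B h : Hs s h -> (1%:M - h) \in unitmx.
Proof.
move=> [_ [_ ph]]; rewrite -unitmx_tr unitmxE unitfE.
apply/negP => /det0P [u u0 u1h].
have v0 : u^T != 0 by rewrite trmx_eq0.
have hv : h *m u^T = u^T.
  apply/eqP; rewrite eq_sym -subr_eq0 -{1}(mul1mx u^T) -mulmxBl.
  by rewrite -trmx_eq0 trmx_mul trmxK u1h.
have := ph _ v0; rewrite mulmxBr mulmxBl -!mulmxA hv (mulmxA _ (adj h)).
by rewrite -conjT_mulmx hv subrr mxE ltxx.
Qed.

End Contractions.

Lemma invmxM (C : comUnitRingType) (n : nat) (A B : 'M[C]_n) :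
  A \in unitmx -> B \in unitmx -> invmx (A *m B) = invmx B *m invmx A.
Proof.
move=> Au Bu; have ABu : A *m B \in unitmx by rewrite unitmx_mul Au Bu.
apply: (can_inj (mulKmx ABu)).
by rewrite mulmxV // mulmxA mulmxK // mulmxV.
Qed.

Section CayleyTransform.
Variables (C : numClosedFieldType) (n : nat) (s : 'M[C]_n).
Implicit Types x y h : 'M[C]_n.

Lemma a_of_addE h :
  (1%:M - h) \in unitmx -> a_of s h + s = 2 *: (s *m invmx (1%:M - h)).
Proof.
move=> hu; rewrite /a_of -{2}[s](mulmxK hu) -mulmxDl -mulmxDr.
rewrite addrACA subrr addr0 -mulr2n -scaler_nat.
by rewrite -scalemxAr mulmx1 -scalemxAl.
Qed.

Lemma invmx1B_mul_sandwich x y :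
  (1%:M - x) \in unitmx -> (1%:M - y) \in unitmx ->
  invmx (1%:M - x) *m (1%:M - x *m y) *m invmx (1%:M - y)
  = invmx (1%:M - x) + invmx (1%:M - y) - 1%:M.
Proof.
move=> xu yu.
have Ux : invmx (1%:M - x) *m x = invmx (1%:M - x) - 1%:M.
  by rewrite -{3}(mulVmx xu) mulmxBr mulmx1 subKr.
have -> : 1%:M - x *m y = (1%:M - x) + x *m (1%:M - y).
  by rewrite mulmxBr mulmx1 addrA subrK.
rewrite (mulmxDr (invmx _)) mulVmx // mulmxA Ux mulmxDl mul1mx -mulmxA mulmxV //.
by rewrite mulmxBl mul1mx mulmx1 addrCA addrA.
Qed.

Lemma a_of_mul x y :
  s \in unitmx -> (1%:M - x) \in unitmx -> (1%:M - y) \in unitmx ->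
  (1%:M - x *m y) \in unitmx ->
  a_of s (x *m y) = circ s (a_of s x) (a_of s y).
Proof.
move=> su xu yu xyu; rewrite /circ; apply: (canRL (addrK s)).
set X := a_of s x; set Y := a_of s y.
set K := (1%:M - x *m y) *m invmx (1%:M - y).
have Ku : K \in unitmx by rewrite unitmx_mul xyu unitmx_inv.
have Xsu : X + s \in unitmx.
  by rewrite a_of_addE // unitmxZ ?unitmx_mul ?su ?unitmx_inv // unitfE pnatr_eq0.
have XYE : X + Y = (X + s) *m K.
  have -> : X + Y = (X + s) + (Y + s) - 2 *: s.
    by rewrite scaler_nat mulr2n addrACA addrK.
  rewrite !a_of_addE // -scalemxAl -!mulmxA [invmx (1%:M - x) *m _]mulmxA.
  by rewrite invmx1B_mul_sandwich // mulmxBr mulmxDr mulmx1 scalerBr scalerDr.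
rewrite XYE invmxM // mulmxA mulmxKV // invmxM ?unitmx_inv // invmxK.
by rewrite !a_of_addE // -scalemxAl -mulmxA mulKmx.
Qed.

End CayleyTransform.

Theorem mainTheorem13 (C : numClosedFieldType) (n : nat) (s : 'M[C]_n) :
  is_sym_involution s ->
  forall x y : 'M[C]_n, Hs s x -> Hs s y ->
    Hs s (x *m y) /\ a_of s (x *m y) = circ s (a_of s x) (a_of s y).
Proof.
move=> [_ ss] x y Hx Hy; have Hxy := Hs_mul Hx Hy; split=> //.
have [su _] := mulmx1_unit ss.
by apply: a_of_mul; [|exact: Hs_unit1B Hx|exact: Hs_unit1B Hy|exact: Hs_unit1B Hxy].
Qed.
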